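(* Let $R$ be a locally compact topological ring and $M$ a locally compact left topological $R$-module such that its Pontryagin dual $\widehat{M}$ (a topological right $R$-module via $\chi^r(m)=\chi(rm)$) has the no small submodules property. Then $M$ is compactly generated, i.e. there is a compact subset $K\subset M$ with $M=RK$.
   Context: All topological groups are Hausdorff; rings are unital. $\widehat{M}$ is the group of continuous homomorphisms $M\to\mathbb{S}^1$ with the compact-open topology. A topological module has the no small submodules property if there exists a neighbourhood of $0$ whose only submodule contained in it is the trivial one. $RK$ denotes the submodule generated by $K$. *)

From HB Require Import structures.
From mathcomp Require Import all_boot all_order all_algebra.
From mathcomp Require Import all_classical all_reals all_analysis.
From mathcomp Require Import Rstruct Rstruct_topology.
From mathcomp Require Import ring.

Set Implicit Arguments.
Unset Strict Implicit.
Unset Printing Implicit Defensive.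

Import Order.TTheory GRing.Theory Num.Theory.
Local Open Scope classical_set_scope.
Local Open Scope ring_scope.

HB.mixin Record TopZmod_PzRing_isTopRing R
    of GRing.PzRing R & TopologicalZmodule R := {
  topring_mul_cont : continuous (fun p : R * R => p.1 * p.2) }.

#[short(type="topRingType")]
HB.structure Definition TopRing :=
  {R of TopZmod_PzRing_isTopRing R & GRing.PzRing R & TopologicalZmodule R}.

(** Topological left R-modules: a topological abelian group M together with a
    scalar action [act : R -> M -> M] satisfying the left module axioms and
    jointly continuous as a map R x M -> M.  (MathComp-Analysis cannot join
    [lmodType R] with a topology for a general ring R, since it already
    declares such a join for numDomainType scalars only; hence the action is
    an explicit datum.) *)
Definition topological_lmodule (R : topRingType) (M : TopologicalZmodule.type)
    (act : R -> M -> M) : Prop :=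
  [/\ (forall r x y, act r (x + y) = act r x + act r y),
      (forall r s x, act (r + s) x = act r x + act s x),
      (forall r s x, act (r * s) x = act r (act s x)),
      (forall x, act 1 x = x)
    & continuous (fun p : R * M => act p.1 p.2)].

(** The circle group S^1 = {(a,b) in R^2 | a^2 + b^2 = 1} (i.e. unit complex
    numbers a + ib), with the subspace topology of R^2 and complex
    multiplication. *)
Definition circle_set : set (Rdefinitions.R * Rdefinitions.R) :=
  [set p | p.1 ^+ 2 + p.2 ^+ 2 = 1].

Definition S1 : topologicalType := set_type circle_set.

Definition cmul (p q : Rdefinitions.R * Rdefinitions.R) :=
  (p.1 * q.1 - p.2 * q.2, p.1 * q.2 + p.2 * q.1).

Lemma cmul_circle_pair (p q : Rdefinitions.R * Rdefinitions.R) :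
  circle_set p -> circle_set q -> circle_set (cmul p q).
Proof.
case: p => a b; case: q => c d; rewrite /circle_set /cmul /= => hz hw.
have -> : (a * c - b * d) ^+ 2 + (a * d + b * c) ^+ 2
        = (a ^+ 2 + b ^+ 2) * (c ^+ 2 + d ^+ 2) by ring.
by rewrite hz hw mulr1.
Qed.

Lemma cmul_circle (z w : S1) : circle_set (cmul (set_val z) (set_val w)).
Proof. exact: cmul_circle_pair (set_valP z) (set_valP w). Qed.

Lemma cinv_circle (z : S1) : circle_set ((set_val z).1, - (set_val z).2).
Proof. by have := set_valP z; rewrite /circle_set /= sqrrN. Qed.

Lemma one_circle : circle_set (1, 0).
Proof. by rewrite /circle_set /= expr0n /= addr0 expr1n. Qed.

Definition s1mul (z w : S1) : S1 := exist (fun x => x \in circle_set) _ (mem_set (cmul_circle z w)).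
Definition s1inv (z : S1) : S1 := exist (fun x => x \in circle_set) _ (mem_set (cinv_circle z)).
Definition s1one : S1 := exist (fun x => x \in circle_set) _ (mem_set one_circle).

Section Dual.
Variables (R : topRingType) (M : TopologicalZmodule.type) (act : R -> M -> M).

Definition is_character (chi : M -> S1) : Prop :=
  continuous chi /\ forall x y, chi (x + y) = s1mul (chi x) (chi y).

Definition dual : set {compact-open, M -> S1} := [set chi | is_character chi].

Definition trivial_char : {compact-open, M -> S1} := fun _ => s1one.

Definition dual_act (chi : {compact-open, M -> S1}) (r : R)
  : {compact-open, M -> S1} := fun m => chi (act r m).

Definition dual_submodule (S : set {compact-open, M -> S1}) : Prop :=
  [/\ S `<=` dual, S trivial_char,
      (forall chi psi, S chi -> S psi -> S (fun m => s1mul (chi m) (psi m))),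
      (forall chi, S chi -> S (fun m => s1inv (chi m)))
    & (forall chi r, S chi -> S (dual_act chi r))].

Definition dual_nss : Prop :=
  exists U : set (subspace dual),
    nbhs (trivial_char : subspace dual) U /\
    forall S : set {compact-open, M -> S1},
      dual_submodule S -> S `<=` U -> S = [set trivial_char].

Definition lsubmodule (S : set M) : Prop :=
  [/\ S 0, (forall x y, S x -> S y -> S (x + y)), (forall x, S x -> S (- x))
    & (forall (r : R) x, S x -> S (act r x))].

Definition gen_submodule (K : set M) : set M :=
  \bigcap_(S in [set S | lsubmodule S /\ K `<=` S]) S.

End Dual.

(** Let [U] be a neighbourhood of the trivial character witnessing the no
    small submodules property.  In the compact-open topology there is a
    compact [C] such that every character trivial on [C] lies in [U].  Take a
    compact neighbourhood [V] of [0] and let [N] be the submodule generated by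
    [K = C ∪ V].  As [N] is open, every homomorphism [M -> S^1] trivial on [N]
    is continuous, so the annihilator of [N] is a submodule of the dual
    contained in [U], hence trivial.  But [S^1] is divisible, so characters of
    the discrete group [M/N] separate its points: therefore [N = M]. *)

From HB Require Import structures.
From mathcomp Require Import all_boot all_order all_algebra.
From mathcomp Require Import all_classical all_reals all_analysis.
From mathcomp Require Import Rstruct Rstruct_topology.
From mathcomp Require Import ring lra trigo.
Set Implicit Arguments.
Unset Strict Implicit.
Unset Printing Implicit Defensive.
Import Order.TTheory GRing.Theory Num.Theory.
Local Open Scope classical_set_scope.
Local Open Scope ring_scope.

(* [circle] is [S1] with its group law written additively. *)
Definition circle : Type := S1.
HB.instance Definition _ := Choice.on circle.

Lemma circle_val_inj (z w : S1) : set_val z = set_val w -> z = w.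
Proof. exact: val_inj. Qed.

Lemma circle_valP (z : S1) : (set_val z).1 ^+ 2 + (set_val z).2 ^+ 2 = 1.
Proof. by case: z => p hp; exact: set_mem hp. Qed.

Lemma val_s1mul (x y : S1) : set_val (s1mul x y) = cmul (set_val x) (set_val y).
Proof. by []. Qed.

Lemma val_s1inv (x : S1) : set_val (s1inv x) = ((set_val x).1, - (set_val x).2).
Proof. by []. Qed.

Lemma val_s1one : set_val s1one = (1, 0).
Proof. by []. Qed.

Lemma s1mulA : associative (s1mul : circle -> circle -> circle).
Proof.
move=> x y z; apply: circle_val_inj; rewrite !val_s1mul /cmul /=.
by congr pair; ring.
Qed.

Lemma s1mulC : commutative (s1mul : circle -> circle -> circle).
Proof.
move=> x y; apply: circle_val_inj; rewrite !val_s1mul /cmul /=.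
by congr pair; ring.
Qed.

Lemma s1mul1 : left_id (s1one : circle) s1mul.
Proof.
move=> x; apply: circle_val_inj; rewrite val_s1mul val_s1one /cmul.
by case: (set_val x) => a b /=; congr pair; ring.
Qed.

Lemma s1mulV : left_inverse (s1one : circle) s1inv s1mul.
Proof.
move=> x; apply: circle_val_inj; rewrite val_s1mul val_s1inv val_s1one /cmul.
have := circle_valP x; case: (set_val x) => a b /= <-; congr pair; ring.
Qed.

HB.instance Definition _ :=
  GRing.isZmodule.Build circle s1mulA s1mulC s1mul1 s1mulV.

Lemma circle0 : (0 : circle) = s1one. Proof. by []. Qed.
Lemma circleD (x y : circle) : x + y = s1mul x y. Proof. by []. Qed.
Lemma circleN (x : circle) : - x = s1inv x. Proof. by []. Qed.

Definition divisible (T : zmodType) :=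
  forall (a : T) k, (0 < k)%N -> exists b : T, b *+ k = a.

Section Angles.
Local Notation R := Rdefinitions.R.

Definition cis (t : R) : circle :=
  exist (fun p => p \in circle_set) (cos t, sin t) (mem_set (cos2Dsin2 t)).

Lemma val_cis (t : R) : set_val (cis t) = (cos t, sin t).
Proof. by []. Qed.

Lemma cisD (s t : R) : cis (s + t) = cis s + cis t.
Proof.
apply: circle_val_inj; rewrite val_s1mul !val_cis /cmul /= cosD sinD.
by congr pair; ring.
Qed.

Lemma cis0 : cis 0 = 0.
Proof. by apply: circle_val_inj; rewrite val_cis cos0 sin0. Qed.

Lemma cisMn (t : R) n : cis (t *+ n) = cis t *+ n.
Proof. by elim: n => [|n IH]; rewrite ?mulr0n ?cis0 // !mulrS cisD IH. Qed.

Lemma cis_surj (z : circle) : exists t, cis t = z.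
Proof.
case: z => [[a b] hz]; have hab : a ^+ 2 + b ^+ 2 = 1 := set_mem hz.
have a1 : -1 <= a <= 1 by apply/andP; split; nra.
have sin_acos_a : sin (acos a) = `|b|.
  by rewrite (sin_acos a1) -sqrtr_sqr; congr Num.sqrt; lra.
have [b0|b0] := leP 0 b.
  exists (acos a); apply: circle_val_inj.
  by rewrite val_cis acosK ?sin_acos_a ?ger0_norm.
exists (- acos a); apply: circle_val_inj.
by rewrite val_cis cosN sinN acosK ?sin_acos_a ?ltr0_norm ?opprK.
Qed.

Lemma circle_divisible : divisible circle.
Proof.
move=> z k k0; have [t <-] := cis_surj z; exists (cis (t / k%:R)).
by rewrite -cisMn -[_ *+ k]mulr_natr mulfVK // pnatr_eq0 -lt0n.
Qed.

Lemma circle_torsion k : k != 1%N -> exists2 w : circle, w *+ k = 0 & w != 0.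
Proof.
wlog k2 : k / (2 <= k)%N.
  move=> gen; case: k => [|[|k]] // _; last exact: gen.
  by have [w _ w0] := gen 2%N isT isT; exists w.
move=> _; have k0 : 0 < k%:R :> R by rewrite ltr0n (leq_trans _ k2).
exists (cis ((pi / k%:R) *+ 2)).
  rewrite -cisMn -mulrnA mulnC mulrnA -[_ *+ k]mulr_natr mulfVK ?gt_eqF //.
  apply: circle_val_inj.
  by rewrite val_cis val_s1one cos2pi sin_mulr2n sinpi mulr0 mul0rn.
apply/eqP => /(congr1 (fun z : circle => (set_val z).1)).
rewrite val_cis val_s1one /= cos_mulr2n cos2sin2.
have : 0 < sin (pi / k%:R : R).
  apply: sin_gt0_pi; apply/andP; split; first by rewrite divr_gt0 ?pi_gt0.
  by rewrite ltr_pdivrMr // ltr_pMr ?pi_gt0 // (ltr_nat _ 1).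
nra.
Qed.

End Angles.

Section Subgroup.
Variable V : zmodType.

Definition subgroup (D : set V) :=
  [/\ D 0, (forall x y, D x -> D y -> D (x + y)) & (forall x, D x -> D (- x))].

Definition add_cyclic (D : set V) (g : V) :=
  [set x + g *~ n | x in D & n in [set: int]].

Variable D : set V.
Hypothesis sD : subgroup D.

Lemma subgroupB x y : D x -> D y -> D (x - y).
Proof. by case: sD => _ DD DN Dx Dy; apply: DD => //; apply: DN. Qed.

Lemma subgroup_mulz x n : D x -> D (x *~ n).
Proof.
case: sD => D0 DD DN Dx.
have Dmuln m : D (x *+ m).
  by elim: m => [|m IH]; rewrite ?mulr0n // mulrS; apply: DD.
by case: n => m; [rewrite -pmulrn | rewrite NegzE mulrNz -pmulrn; apply: DN].
Qed.

Lemma subgroup_add_cyclic g : subgroup (add_cyclic D g).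
Proof.
case: sD => D0 DD DN; split.
- by exists 0 => //; exists 0 => //; rewrite mulr0z addr0.
- move=> _ _ [x Dx [n _ <-]] [y Dy [m _ <-]].
  exists (x + y); first exact: DD.
  by exists (n + m) => //; rewrite mulrzDr addrACA.
- move=> _ [x Dx [n _ <-]].
  by exists (- x); [exact: DN | exists (- n) => //; rewrite mulrNz opprD].
Qed.

Lemma sub_add_cyclic g : D `<=` add_cyclic D g.
Proof.
by move=> x Dx; exists x => //; exists 0 => //; rewrite mulr0z addr0.
Qed.

Lemma add_cyclic_gen g : add_cyclic D g g.
Proof.
by case: sD => D0 _ _; exists 0 => //; exists 1 => //; rewrite mulr1z add0r.
Qed.

End Subgroup.

Lemma subgroup0 (V : zmodType) : subgroup [set 0 : V].
Proof. by split=> // [x y -> ->|x ->]; rewrite ?addr0 ?oppr0. Qed.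

Lemma subgroupX (U V : zmodType) (A : set U) (B : set V) :
  subgroup A -> subgroup B -> subgroup (A `*` B).
Proof.
case=> A0 AD AN [B0 BD BN]; split => //.
- by move=> [x a] [y b] [/= Ax Ba] [/= Ay Bb]; split; [exact: AD | exact: BD].
- by move=> [x a] [/= Ax Ba]; split; [exact: AN | exact: BN].
Qed.

Lemma subgroup_int_dvdz (I : set int) :
  subgroup I -> exists k : nat, forall n, I n <-> (k %| n)%Z.
Proof.
move=> sI; have [[I0 _ IN] Imulz] := (sI, subgroup_mulz sI).
have [ex|nex] := pselect (exists m : nat, (0 < m)%N && `[< I m >]); last first.
  exists 0%N => n; rewrite dvd0z; split=> [In|/eqP-> //].
  apply: contrapT => /negP n0.
  apply: nex; exists `|n|%N; rewrite absz_gt0 n0; apply/asboolP.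
  have [n_ge0|n_lt0] := leP 0 n; first by rewrite gez0_abs.
  by rewrite ltz0_abs //; apply: IN.
case: (ex_minnP ex) => k /andP[k0 /asboolP Ik] kmin; exists k => n.
have Ikq (q : int) : I (q * k) by have := Imulz _ q Ik; rewrite mulrzz mulrC.
split=> [In|/dvdzP[q ->] //]; apply/dvdz_mod0P.
have k0' : k%:Z != 0 by rewrite eqz_nat -lt0n.
have Ir : I (n %% k)%Z by apply: (subgroupB sI).
have [r_ge0 r_lt] := (modz_ge0 n k0', ltz_mod n k0').
move: r_ge0 r_lt Ir; case: (n %% k)%Z => // -[|r] // _ r_lt Ir.
have /kmin : (0 < r.+1)%N && `[< I r.+1 >] by rewrite asboolT.
by move: r_lt; rewrite ger0_norm // ltz_nat ltnNge => /negbTE->.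
Qed.

Lemma subgroup_multiples_dvdz (V : zmodType) (D : set V) (y : V) :
  subgroup D -> exists k : nat, forall n, D (y *~ n) <-> (k %| n)%Z.
Proof.
move=> sD; apply: subgroup_int_dvdz; case: sD => D0 DD DN; split.
- by rewrite /= mulr0z.
- by move=> n m /= Dn Dm; rewrite mulrzDr; apply: DD.
- by move=> n /= Dn; rewrite mulrNz; apply: DN.
Qed.

Section PartialHomomorphism.
Variables (M T : zmodType).

(* Partial homomorphisms [M -> T] are handled through their graphs, so that a
   chain of them is joined by taking the union. *)
Definition functional (G : set (M * T)) :=
  forall x a b, G (x, a) -> G (x, b) -> a = b.

Definition hom_graph (G : set (M * T)) := subgroup G /\ functional G.

Lemma pair_mulz (x : M) (a : T) n : (x, a) *~ n = (x *~ n, a *~ n).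
Proof.
have pair_muln m : (x, a) *+ m = (x *+ m, a *+ m).
  by elim: m => // m IH; rewrite !mulrS IH.
by case: n => m; rewrite ?NegzE ?mulrNz -!pmulrn pair_muln.
Qed.

Lemma functional_subgroup G :
  subgroup G -> (forall a, G (0, a) -> a = 0) -> functional G.
Proof.
move=> sG G0 x a b Ga Gb; apply/eqP; rewrite -subr_eq0; apply/eqP/G0.
have pairB : (x, a) - (x, b) = (x - x, a - b) := erefl.
by have := subgroupB sG Ga Gb; rewrite pairB subrr.
Qed.

Lemma hom_graph_add_cyclic G y z :
  hom_graph G -> (forall n a, G (y *~ n, a) -> a = z *~ n) ->
  hom_graph (add_cyclic G (y, z)).
Proof.
move=> [sG _] yz; split; first exact: subgroup_add_cyclic.
apply: functional_subgroup; first exact: subgroup_add_cyclic.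
move=> a [[x b] Gxb [n _]]; rewrite pair_mulz => -[xE bE].
have xN : x = - (y *~ n) by rewrite -[x](addrK (y *~ n)) xE sub0r.
have := yz (- n) b; rewrite !mulrNz -xN => /(_ Gxb) bN.
by rewrite -bE bN addNr.
Qed.

End PartialHomomorphism.

Lemma Zorn_bigcup_nonempty (T : Type) (P : set (set T)) (A0 : set T) : P A0 ->
  (forall F : set (set T), F `<=` P -> F !=set0 -> total_on F subset ->
    P (\bigcup_(X in F) X)) ->
  exists A, P A /\ forall B, A `<` B -> ~ P B.
Proof.
move=> PA0 chainP.
(* [Zorn_bigcup] also needs the union of the empty chain, so [set0] is
   adjoined to [P]. *)
have [A [PA Amax]] : exists A, (P `|` [set set0]) A /\
    forall B, A `<` B -> ~ (P `|` [set set0]) B.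
  apply: Zorn_bigcup => F FP Ftot.
  have [[X FX PX]|noP] := pselect (exists2 X, F X & P X); last first.
    right; apply/seteqP; split=> // x [X FX Xx].
    by case: (FP X FX) => [PX|X0]; [case: noP; exists X | rewrite X0 in Xx].
  left; have -> : \bigcup_(X in F) X = \bigcup_(X in F `&` P) X.
    apply/seteqP; split=> x [Y FY Yx]; last by exists Y => //; case: FY.
    by case: (FP Y FY) => [PY|Y0]; [exists Y | rewrite Y0 in Yx].
  apply: chainP; first by move=> ? [].
    by exists X.
  by move=> Y Z [FY _] [FZ _]; exact: Ftot.
case: PA => [PA|Aempty].
  by exists A; split=> // B AB PB; apply: (Amax B AB); left.
have [A00|/set0P[a A0a]] := eqVneq A0 set0.
  exists A0; split=> // B; rewrite A00 -Aempty => AB PB.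
  by apply: (Amax B AB); left.
exfalso; apply: (Amax A0); last by left.
by rewrite Aempty; split=> // /(_ a A0a).
Qed.

Lemma bigcup_chain2 (T : Type) (F : set (set T)) p q : total_on F subset ->
  (\bigcup_(X in F) X) p -> (\bigcup_(X in F) X) q ->
  exists2 X, F X & X p /\ X q.
Proof.
move=> Ftot [X FX Xp] [Y FY Yq].
have [XY|YX] := Ftot X Y FX FY.
  by exists Y => //; split=> //; apply: XY.
by exists X => //; split=> //; apply: YX.
Qed.

Section Extension.
Variables (M T : zmodType).

Lemma hom_graph_bigcup (F : set (set (M * T))) :
  F `<=` @hom_graph M T -> F !=set0 -> total_on F subset ->
  hom_graph (\bigcup_(X in F) X).
Proof.
move=> Fhom [X0 FX0] Ftot.
have common := bigcup_chain2 Ftot; split; [split|].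
- by exists X0 => //; have [[]] := Fhom X0 FX0.
- move=> p q /common/[apply] -[X FX [Xp Xq]]; exists X => //.
  by have [[_ + _] _] := Fhom X FX; apply.
- move=> p /[dup] /common/[apply] -[X FX [Xp _]]; exists X => //.
  by have [[_ _ +] _] := Fhom X FX; apply.
- move=> x a b /common/[apply] -[X FX [Xa Xb]].
  exact: (Fhom X FX).2 Xa Xb.
Qed.

Hypothesis divT : divisible T.

Lemma hom_graph_compatible (G : set (M * T)) y : hom_graph G ->
  exists z, forall n a, G (y *~ n, a) -> a = z *~ n.
Proof.
move=> [sG Gf]; have [G0 GD GN] := sG.
pose D := [set x | exists a, G (x, a)].
have sD : subgroup D.
  split; first by exists 0.
  - by move=> x y' [a Ga] [b Gb]; exists (a + b); apply: (GD (x, a) (y', b)).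
  - by move=> x [a Ga]; exists (- a); apply: (GN (x, a)).
(* [k] generates the multiples of [y] in the domain of [G], and [z] is a
   [k]-th root of the value of [G] at [k y]. *)
have [k Dk] := subgroup_multiples_dvdz y sD.
have [b Gb] : D (y *~ k) by apply/Dk; exact: dvdzz.
have [z zk] : exists z, z *+ k = b.
  have [k0|k0] := posnP k; last exact: divT.
  by exists 0; move: Gb; rewrite k0 mulr0z mul0rn => /(Gf _ _ _ G0).
exists z => n a Gya; have /Dk/dvdzP[q nE] : D (y *~ n) by exists a.
have Gyn : G (y *~ n, b *~ q).
  by rewrite nE mulrC mulrzA -pair_mulz; apply: subgroup_mulz.
by rewrite (Gf _ _ _ Gya Gyn) -zk nE mulrC mulrzA pmulrn.
Qed.

Lemma hom_graph_total (G0 : set (M * T)) : hom_graph G0 ->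
  exists f : M -> T,
    {morph f : x y / x + y} /\ forall x a, G0 (x, a) -> f x = a.
Proof.
move=> hG0; pose P := [set G | hom_graph G /\ G0 `<=` G].
have [A [[hA G0A] Amax]] : exists A, P A /\ forall B, A `<` B -> ~ P B.
  apply: (@Zorn_bigcup_nonempty _ P G0) => [|F FP [X FX] Ftot].
    by split.
  split; first by apply: hom_graph_bigcup => // [Y /FP[] //|]; exists X.
  by move=> p G0p; exists X => //; have [_ +] := FP X FX; apply.
have [[_ AD _] Af_fun] := hA.
have Atotal y : exists a, A (y, a).
  apply: contrapT => Ay; have [z yz] := hom_graph_compatible y hA.
  apply: (Amax (add_cyclic A (y, z))); last first.
    split; first exact: hom_graph_add_cyclic.
    exact: subset_trans G0A (@sub_add_cyclic _ _ _).
  split; first exact: sub_add_cyclic.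
  by move=> /(_ (y, z) (add_cyclic_gen hA.1 _)) Ayz; apply: Ay; exists z.
have [f Af] := choice Atotal.
exists f; split=> [x y|x a /G0A Axa]; last exact: Af_fun (Af x) Axa.
exact: Af_fun (Af (x + y)) (AD (x, f x) (y, f y) (Af x) (Af y)).
Qed.

End Extension.

Lemma circle_character_separates (M : zmodType) (N : set M) (x0 : M) :
  subgroup N -> ~ N x0 ->
  exists chi : M -> circle,
    [/\ {morph chi : x y / x + y}, forall n, N n -> chi n = 0 & chi x0 != 0].
Proof.
move=> sN Nx0; have [k Nk] := subgroup_multiples_dvdz x0 sN.
have [z zk z0] : exists2 z : circle, z *+ k = 0 & z != 0.
  apply: circle_torsion; apply: contra_notN Nx0 => /eqP k1.
  by rewrite -[x0]mulr1z Nk k1.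
have sN0 : subgroup (N `*` [set 0 : circle]) := subgroupX sN (subgroup0 _).
have hN0 : hom_graph (N `*` [set 0 : circle]).
  by split=> [|x a b [_ /= ->] [_ /= ->]]; first exact: sN0.
pose G0 := add_cyclic (N `*` [set 0]) (x0, z).
have hG0 : hom_graph G0.
  apply: hom_graph_add_cyclic => // n a [/Nk/dvdzP[q ->] /= ->].
  by rewrite mulrC mulrzA -pmulrn zk mul0rz.
have [chi [chiD chiG0]] := hom_graph_total circle_divisible hG0.
exists chi; split=> // [n Nn|]; first exact/chiG0/sub_add_cyclic.
by rewrite (chiG0 x0 z) //; apply: (add_cyclic_gen sN0).
Qed.

Lemma locally_compact_nbhs (X : topologicalType) (x : X) :
  locally_compact [set: X] -> exists2 V, nbhs x V & compact V.
Proof. by move=> /(_ x I) [V]; rewrite withinET => xV [cV _]; exists V. Qed.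

Lemma continuous_translation_invariant (M : topologicalZmodType)
    (X : topologicalType) (f : M -> X) (N : set M) :
  nbhs 0 N -> (forall x n, N n -> f (x + n) = f x) -> continuous f.
Proof.
move=> N0 fN x W /= fxW.
have subx : (fun y => y - x) @ x --> (0 : M).
  rewrite -(subrr x); apply: (@continuous_comp _ _ _ (fun y => (y, x))
    (fun z : M * M => z.1 - z.2)); last exact: sub_continuous.
  by apply: cvg_pair; [exact: cvg_id | exact: cvg_cst].
have : nbhs x [set y | N (y - x)] := subx N N0.
apply: filterS => y /= Nyx.
by rewrite -(subrK x y) addrC fN //; exact: nbhs_singleton.
Qed.

Section Dual.
Variables (R : topRingType) (M : topologicalZmodType) (act : R -> M -> M).

Lemma gen_submodule_lsubmodule K : lsubmodule act (gen_submodule act K).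
Proof.
split=> [S [[]] //|x y Kx Ky S hS|x Kx S hS|r x Kx S hS];
  have [[_ SD SN Sact] _] := hS.
- exact: SD (Kx S hS) (Ky S hS).
- exact: SN (Kx S hS).
- exact: Sact (Kx S hS).
Qed.

Lemma sub_gen_submodule K : K `<=` gen_submodule act K.
Proof. by move=> x Kx S [_]; apply. Qed.

Lemma lsubmodule_subgroup N : lsubmodule act N -> subgroup N.
Proof. by case. Qed.

Lemma dual_nbhs_compact (U : set (subspace (dual (M:=M)))) :
  nbhs (@trivial_char M : subspace (dual (M:=M))) U ->
  exists2 C, compact C & forall chi, dual chi ->
    (forall x, C x -> chi x = s1one) -> U chi.
Proof.
have triv_dual : dual (@trivial_char M).
  split; first exact: cst_continuous.
  by move=> x y; rewrite /trivial_char -circle0 -circleD addr0.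
move=> U0; have {}U0 : within (dual (M:=M))
    (nbhs (@trivial_char M : {compact-open, M -> S1})) U.
  by rewrite (nbhs_subspace_in triv_dual).
pose F := filter_from [set C : set M | compact C]
  (fun C => [set g : {compact-open, M -> S1} | forall x, C x -> g x = s1one]).
have FF : Filter F.
  apply: filter_from_filter; first by exists set0; exact: compact0.
  move=> C1 C2 cC1 cC2; exists (C1 `|` C2); first exact: compactU.
  by move=> g g1; split=> x Cx; apply: g1; [left|right].
have Fcvg : F --> (@trivial_char M : {compact-open, M -> S1}).
  apply/compact_open_cvgP => K O cK oO KO.
  by exists K => // g gK _ [x Kx <-]; rewrite gK //; apply: KO; exists x.
have [C cC CU] := Fcvg _ U0.
by exists C => // chi chi_dual chiC; apply: CU.
Qed.

Definition annihilator (N : set M) : set {compact-open, M -> S1} :=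
  [set psi | (forall x y, psi (x + y) = s1mul (psi x) (psi y)) /\
             forall n, N n -> psi n = s1one].

Lemma annihilator_dual N : nbhs 0 N -> annihilator N `<=` dual (M:=M).
Proof.
move=> N0 psi [psiD psiN]; split=> //.
apply: continuous_translation_invariant N0 _ => x n Nn.
by rewrite psiD (psiN n Nn) -circle0 -circleD addr0.
Qed.

Lemma dual_submodule_annihilator N :
  (forall r x y, act r (x + y) = act r x + act r y) ->
  lsubmodule act N -> nbhs 0 N -> dual_submodule act (annihilator N).
Proof.
move=> actD [_ _ _ Nact] N0; split.
- exact: annihilator_dual.
- by split=> // x y; rewrite /trivial_char -circle0 -circleD addr0.
- move=> f g [fD fN] [gD gN]; split=> [x y|n Nn].
    by rewrite fD gD -!circleD addrACA.
  by rewrite fN // gN // -circle0 -circleD addr0.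
- move=> f [fD fN]; split=> [x y|n Nn].
    by rewrite fD -!circleN -circleD opprD.
  by rewrite fN // -circle0 -circleN oppr0.
- move=> f r [fD fN]; split=> [x y|n Nn]; rewrite /dual_act ?actD ?fD //.
  by rewrite fN //; apply: Nact.
Qed.

Lemma annihilator_separates N x0 : subgroup N -> ~ N x0 ->
  exists2 chi, annihilator N chi & chi x0 != s1one.
Proof.
move=> sN Nx0.
have [chi [chiD chiN chix0]] := circle_character_separates sN Nx0.
by exists chi.
Qed.

End Dual.

Theorem mainTheorem16 (R : topRingType) (M : TopologicalZmodule.type)
  (act : R -> M -> M) :
  hausdorff_space R -> locally_compact [set: R] ->
  topological_lmodule act -> hausdorff_space M -> locally_compact [set: M] ->
  dual_nss act ->
  exists K : set M, compact K /\ gen_submodule act K = [set: M].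
Proof.
move=> _ _ [actD _ _ _ _] _ lcM [U [U0 nss]].
have [C cC CU] := dual_nbhs_compact U0.
have [V V0 cV] := locally_compact_nbhs 0 lcM.
exists (C `|` V); split; first exact: compactU.
set N := gen_submodule act (C `|` V).
have subN : lsubmodule act N by apply: gen_submodule_lsubmodule.
have CVN : C `|` V `<=` N by apply: sub_gen_submodule.
have N0 : nbhs 0 N by apply: filterS V0 => x Vx; apply: CVN; right.
have annU : annihilator N `<=` U.
  move=> psi /[dup] /(annihilator_dual N0) psi_dual [_ psiN].
  by apply: CU => // x Cx; apply: psiN; apply: CVN; left.
have annE := nss _ (dual_submodule_annihilator actD subN N0) annU.
apply/seteqP; split=> // x0 _; apply: contrapT => Nx0.
have [chi] := annihilator_separates (lsubmodule_subgroup subN) Nx0.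
by rewrite annE => ->; rewrite eqxx.
Qed.
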